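(* Let $n>s\ge1$ be integers, let $t_0,\dots,t_s,t$ be independent indeterminates, $g(x)=\sum_{k=0}^s t_kx^k$ and $f(t;x)=x^n+t\,g(x)$. Let $B=(b_{ij})_{1\le i,j\le s}=M_s(g,g')$ and put $l_k=n-s+k+2$. Then $M_n(f(t;x),f'(t;x))=(\hat a_{ij}(t)+\tilde a_{ij}(t))_{1\le i,j\le n}$, where $$\hat a_{ij}(t)=\begin{cases} n & (i,j)=(1,1),\\ (s-k)t_{s-k}t & (i,j)=(1,l_k-1)\text{ or }(l_k-1,1),\ 0\le k\le s-1,\\ -(l_k-2)t_{s-k}t & i+j=l_k,\ 2\le i,j\le l_k-2,\ 0\le k\le s,\\ 0&\text{otherwise},\end{cases}$$ $$\tilde a_{ij}(t)=\begin{cases} b_{i-(n-s),\,j-(n-s)}\,t^2 & n-s+1\le i,j\le n,\\ 0&\text{otherwise}.\end{cases}$$ Here derivatives are with respect to $x$.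
   Context: Bezoutian: for polynomials $f_1,f_2$ over a field $F$ of characteristic $0$ and an integer $n\ge\max\{\deg f_1,\deg f_2\}$, write $\frac{f_1(x)f_2(y)-f_1(y)f_2(x)}{x-y}=\sum_{i,j=1}^n\alpha_{ij}x^{n-i}y^{n-j}\in F[x,y]$ and set $M_n(f_1,f_2)=(\alpha_{ij})_{1\le i,j\le n}$. Here $F=\mathbb{R}(t_0,\dots,t_s,t)$. *)

From HB Require Import structures.
From mathcomp Require Import all_boot all_order all_algebra.
Set Implicit Arguments. Unset Strict Implicit. Unset Printing Implicit Defensive.
Import Order.TTheory GRing.Theory Num.Theory.
Local Open Scope ring_scope.

(* Bivariate polynomials are {poly {poly F}}: the outer variable is y, the
   inner one is x.  For p : {poly F}, p%:P is p(x) and p^:P is p(y). *)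

(* (f1(x) f2(y) - f1(y) f2(x)) / (x - y) ; note x - y = -('X - x%:P). *)
Definition bezout_poly (F : fieldType) (f1 f2 : {poly F}) : {poly {poly F}} :=
  - ((f1%:P * f2^:P - f1^:P * f2%:P) %/ ('X - ('X)%:P)).

(* alpha_ij = coefficient of x^(n-i) y^(n-j), 1-based indices i, j. *)
Definition bezout_coef (F : fieldType) (n : nat) (f1 f2 : {poly F}) (i j : nat) : F :=
  ((bezout_poly f1 f2)`_(n - j))`_(n - i).

Definition bezout_mx (F : fieldType) (n : nat) (f1 f2 : {poly F}) : 'M[F]_n :=
  \matrix_(i < n, j < n) bezout_coef n f1 f2 i.+1 j.+1.

Definition mx1 (F : fieldType) (m : nat) (A : 'M[F]_m) (i j : nat) : F :=
  match @insub _ (fun k => k < m)%N 'I_m i.-1, @insub _ (fun k => k < m)%N 'I_m j.-1 with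
  | Some a, Some b => if ((0 < i) && (0 < j))%N then A a b else 0
  | _, _ => 0
  end.

Definition lk (n s k : nat) : nat := (n - s + k + 2)%N.

(* \hat a_{ij}(t), 1-based i, j.  The cases of the paper are pairwise
   disjoint and in each sum at most one summand is nonzero. *)
Definition ahat (F : fieldType) (n s : nat) (tt : nat -> F) (t : F) (i j : nat) : F :=
  if (i == 1%N) && (j == 1%N) then n%:R
  else
    \sum_(k < s)
      (if ((i == 1%N) && (j == (lk n s k).-1)) || ((i == (lk n s k).-1) && (j == 1%N))
       then (s - k)%:R * tt (s - k)%N * t else 0)
  + \sum_(k < s.+1)
      (if [&& (i + j == lk n s k)%N, (2 <= i <= (lk n s k) - 2)%N
            & (2 <= j <= (lk n s k) - 2)%N]
       then - (((lk n s k) - 2)%:R * tt (s - k)%N * t) else 0).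

Definition atilde (F : fieldType) (n s : nat) (B : 'M[F]_s) (t : F) (i j : nat) : F :=
  if [&& (n - s + 1 <= i <= n)%N & (n - s + 1 <= j <= n)%N]
  then mx1 B (i - (n - s))%N (j - (n - s))%N * t ^+ 2
  else 0.
Arguments atilde {F} n s B t i j.
Arguments ahat {F} n s tt t i j.
Arguments bezout_mx {F} n f1 f2.
Arguments bezout_coef {F} n f1 f2 i j.

From HB Require Import structures.
From mathcomp Require Import all_boot all_order all_algebra.
From mathcomp Require Import zify ring.
Set Implicit Arguments. Unset Strict Implicit. Unset Printing Implicit Defensive.
Import GRing.Theory.
Local Open Scope ring_scope.

(** Dividing f1(x) f2(y) - f1(y) f2(x) by x - y gives the coefficient of
    x^p y^q in closed form, C(p, q) = sum_(k <= min(p, q)) (f1_(p+q+1-k) f2_k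
    - f1_k f2_(p+q+1-k)).  This expression is bilinear and skew-symmetric in
    (f1, f2), so for f = x^n + t g and f' = n x^(n-1) + t g' the Bezoutian
    splits as n C(x^n, x^(n-1)) + t C(x^n, g') - n t C(x^(n-1), g)
    + t^2 C(g, g').  The last term is the shifted block t^2 M_s(g, g'); the
    monomial terms are explicit and only contribute along the antidiagonals
    i + j = l_k, which gives the matrix (\hat a_ij). *)

Lemma big_ord_if_unique (V : nmodType) m (P : pred nat) (x : nat -> V) k0 :
  (forall k, (k < m)%N -> P k -> k = k0) ->
  \sum_(k < m) (if P k then x (val k) else 0) =
  if (k0 < m)%N && P k0 then x k0 else 0.
Proof.
move=> Puniq; case: ifPn => [/andP[lt_k0m Pk0] | not_k0].
  rewrite (bigD1 (Ordinal lt_k0m)) //= Pk0 big1 ?addr0 // => k neq_k.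
  case: ifP => // Pk; move: neq_k.
  by rewrite -(inj_eq val_inj) /= (Puniq _ (ltn_ord k) Pk) eqxx.
rewrite big1 // => k _; case: ifP => // Pk.
by move: not_k0; rewrite -(Puniq _ (ltn_ord k) Pk) ltn_ord Pk.
Qed.

Section BezoutPolyCoef.
Variable R : comNzRingType.

Definition bezout_poly_coef (f1 f2 : {poly R}) (p q : nat) : R :=
  \sum_(k < (minn p q).+1)
    (f1`_(p + q + 1 - k) * f2`_k - f1`_k * f2`_(p + q + 1 - k)).

Lemma bezout_poly_coef_eq0 (f1 f2 : {poly R}) K p q :
  (size f1 <= K)%N -> (size f2 <= K)%N -> (K <= (maxn p q).+1)%N ->
  bezout_poly_coef f1 f2 p q = 0.
Proof.
move=> /leq_sizeP f1K /leq_sizeP f2K leK; rewrite /bezout_poly_coef big1 // => k _.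
have hk := ltn_ord k.
have [-> ->] : f1`_(p + q + 1 - k) = 0 /\ f2`_(p + q + 1 - k) = 0.
  by split; [apply: f1K | apply: f2K]; lia.
by rewrite mulr0 mul0r subrr.
Qed.

(* Coefficientwise form of C(x, y) * (x - y) = f1(x) f2(y) - f1(y) f2(x). *)
Lemma bezout_poly_coef_shift (f1 f2 : {poly R}) p q :
  (if p is p'.+1 then bezout_poly_coef f1 f2 p' q else 0)
  - (if q is q'.+1 then bezout_poly_coef f1 f2 p q' else 0)
  = f1`_p * f2`_q - f1`_q * f2`_p.
Proof.
rewrite /bezout_poly_coef.
case: p => [|p]; case: q => [|q].
- by rewrite !subrr.
- by rewrite min0n big_ord1 sub0r subn0 add0n addn1 opprB.
- by rewrite subr0 minn0 big_ord1 !subn0 addn0 addn1.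
have -> : (p + q.+1 + 1 = p.+1 + q + 1)%N by lia.
set N := (p.+1 + q + 1)%N.
case: (ltngtP p q) => cmp_pq.
- have -> : minn p q.+1 = p by lia.
  have -> : minn p.+1 q = p.+1 by lia.
  rewrite [X in _ - X]big_ord_recr /= opprD addrA subrr sub0r.
  have -> : (N - p.+1 = q.+1)%N by rewrite /N; lia.
  by rewrite opprB.
- have -> : minn p q.+1 = q.+1 by lia.
  have -> : minn p.+1 q = q by lia.
  rewrite [X in X - _]big_ord_recr /= addrAC subrr add0r.
  by have -> : (N - q.+1 = p.+1)%N by rewrite /N; lia.
- have -> : minn p q.+1 = p by lia.
  have -> : minn p.+1 q = p by lia.
  by rewrite subrr cmp_pq subrr.
Qed.

Lemma bezout_poly_coefDl (f1 f1' f2 : {poly R}) p q :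
  bezout_poly_coef (f1 + f1') f2 p q =
  bezout_poly_coef f1 f2 p q + bezout_poly_coef f1' f2 p q.
Proof.
by rewrite /bezout_poly_coef -big_split; apply: eq_bigr => k _ /=; rewrite !coefD; ring.
Qed.

Lemma bezout_poly_coefDr (f1 f2 f2' : {poly R}) p q :
  bezout_poly_coef f1 (f2 + f2') p q =
  bezout_poly_coef f1 f2 p q + bezout_poly_coef f1 f2' p q.
Proof.
by rewrite /bezout_poly_coef -big_split; apply: eq_bigr => k _ /=; rewrite !coefD; ring.
Qed.

Lemma bezout_poly_coefZl a (f1 f2 : {poly R}) p q :
  bezout_poly_coef (a *: f1) f2 p q = a * bezout_poly_coef f1 f2 p q.
Proof.
by rewrite /bezout_poly_coef mulr_sumr; apply: eq_bigr => k _; rewrite !coefZ; ring.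
Qed.

Lemma bezout_poly_coefZr a (f1 f2 : {poly R}) p q :
  bezout_poly_coef f1 (a *: f2) p q = a * bezout_poly_coef f1 f2 p q.
Proof.
by rewrite /bezout_poly_coef mulr_sumr; apply: eq_bigr => k _; rewrite !coefZ; ring.
Qed.

Lemma bezout_poly_coefC (f1 f2 : {poly R}) p q :
  bezout_poly_coef f1 f2 p q = - bezout_poly_coef f2 f1 p q.
Proof. by rewrite /bezout_poly_coef -sumrN; apply: eq_bigr => k _; ring. Qed.

Lemma bezout_poly_coefXnl m (h : {poly R}) p q :
  bezout_poly_coef 'X^m h p q =
  (if (m <= p + q + 1)%N && (p + q + 1 - m <= minn p q)%N
   then h`_(p + q + 1 - m) else 0)
  - (if (m <= minn p q)%N then h`_(p + q + 1 - m) else 0).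
Proof.
rewrite /bezout_poly_coef sumrB.
under eq_bigr => k _ do rewrite coefXn mulr_natl mulrb.
under [X in _ - X]eq_bigr => k _ do rewrite coefXn mulr_natl mulrb.
rewrite (@big_ord_if_unique _ _ (fun k => p + q + 1 - k == m)%N
           (fun k => h`_k) (p + q + 1 - m)); last by move=> k hk /eqP; lia.
rewrite (@big_ord_if_unique _ _ (fun k => k == m)%N
           (fun k => h`_(p + q + 1 - k)) m); last by move=> k _ /eqP.
rewrite eqxx andbT ltnS; congr (_ - _); congr (if _ then _ else _).
by apply/idP/idP; lia.
Qed.

Lemma bezout_poly_coef_Xn_add_scale n (h : {poly R}) t p q :
  let f := 'X^n + t *: h in
  bezout_poly_coef f f^`() p q =
    n%:R * bezout_poly_coef 'X^n 'X^(n.-1) p q + t * bezout_poly_coef 'X^n h^`() p q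
    - n%:R * t * bezout_poly_coef 'X^(n.-1) h p q + t ^+ 2 * bezout_poly_coef h h^`() p q.
Proof.
rewrite /= derivD derivZ derivXn -scaler_nat.
rewrite !(bezout_poly_coefDl, bezout_poly_coefDr, bezout_poly_coefZl, bezout_poly_coefZr).
by rewrite (bezout_poly_coefC h); ring.
Qed.

End BezoutPolyCoef.

Section BezoutMatrix.
Variable F : fieldType.

Lemma coef_bezout_poly (f1 f2 : {poly F}) p q :
  (bezout_poly f1 f2)`_q`_p = bezout_poly_coef f1 f2 p q.
Proof.
set K := (size f1 + size f2)%N.
have [f1K f2K] : (size f1 <= K)%N /\ (size f2 <= K)%N by split; lia.
set E := \poly_(q < K) \poly_(p < K) bezout_poly_coef f1 f2 p q.
have coefE p' q' : E`_q'`_p' = bezout_poly_coef f1 f2 p' q'.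
  rewrite coef_poly; case: ltnP => hq; last first.
    by rewrite coef0 (bezout_poly_coef_eq0 f1K f2K) //; lia.
  rewrite coef_poly; case: ltnP => hp //.
  by rewrite (bezout_poly_coef_eq0 f1K f2K) //; lia.
have numE : f1%:P * f2^:P - f1^:P * f2%:P = (- E) * ('X - ('X)%:P).
  apply/polyP => q'; apply/polyP => p'.
  rewrite mulNr mulrBr !(coefB, coefN, coefCM, coefMC, coef_map, coefMX) /=.
  rewrite -bezout_poly_coef_shift opprB.
  by case: p' => [|p']; case: q' => [|q']; rewrite /= ?coef0 ?coefE.
by rewrite /bezout_poly numE Pdiv.IdomainMonic.mulpK ?monicXsubC // opprK coefE.
Qed.

Lemma bezout_coefE n (f1 f2 : {poly F}) i j :
  bezout_coef n f1 f2 i j = bezout_poly_coef f1 f2 (n - i) (n - j).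
Proof. exact: coef_bezout_poly. Qed.

Lemma atilde_bezoutE n s (f1 f2 : {poly F}) t i j :
  (s < n)%N -> (1 <= i <= n)%N -> (1 <= j <= n)%N ->
  (size f1 <= s.+1)%N -> (size f2 <= s.+1)%N ->
  atilde n s (bezout_mx s f1 f2) t i j =
  bezout_poly_coef f1 f2 (n - i) (n - j) * t ^+ 2.
Proof.
move=> lt_sn hi hj f1s f2s; rewrite /atilde; case: ifPn => inblock; last first.
  by rewrite (bezout_poly_coef_eq0 f1s f2s) ?mul0r //; lia.
rewrite /mx1; case: insubP => [a _ /= ea|]; last by lia.
case: insubP => [b _ /= eb|]; last by lia.
rewrite ifT; last by lia.
rewrite mxE bezout_coefE.
by have [-> ->] : (s - a.+1 = n - i)%N /\ (s - b.+1 = n - j)%N by split; lia.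
Qed.

Lemma ahatE n s (tt : nat -> F) t i j :
  (s < n)%N -> (1 <= i <= n)%N -> (1 <= j <= n)%N ->
  ahat n s tt t i j =
  if (i == 1%N) && (j == 1%N) then n%:R else
  (if ((i == 1%N) || (j == 1%N)) && (n + 2 <= i + j + s)%N
   then (n + 2 - (i + j))%:R * tt (n + 2 - (i + j))%N * t else 0)
  + (if [&& (2 <= i)%N, (2 <= j)%N, (i + j <= n + 2)%N & (n + 2 <= i + j + s)%N]
     then - ((i + j - 2)%:R * tt (n + 2 - (i + j))%N * t) else 0).
Proof.
move=> lt_sn hi hj; rewrite /ahat /lk; case: ifP => // not11.
set k0 := (i + j - (n - s + 2))%N.
rewrite (@big_ord_if_unique _ _
  (fun k => (i == 1%N) && (j == (n - s + k + 2).-1) || (i == (n - s + k + 2).-1) && (j == 1%N))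
  (fun k => (s - k)%:R * tt (s - k)%N * t) k0); last by move=> k; lia.
rewrite (@big_ord_if_unique _ _
  (fun k => [&& i + j == n - s + k + 2, 2 <= i <= n - s + k + 2 - 2
              & 2 <= j <= n - s + k + 2 - 2]%N)
  (fun k => - ((n - s + k + 2 - 2)%:R * tt (s - k)%N * t)) k0); last by move=> k; lia.
rewrite {}/k0; congr (_ + _); case: ifPn => c1; case: ifPn => c2 //; try (exfalso; lia).
- by have -> : (s - (i + j - (n - s + 2)) = n + 2 - (i + j))%N by lia.
- have -> : (s - (i + j - (n - s + 2)) = n + 2 - (i + j))%N by lia.
  by have -> : (n - s + (i + j - (n - s + 2)) + 2 - 2 = i + j - 2)%N by lia.
Qed.

Lemma bezout_coef_Xn_add_scale n s (tt : nat -> F) t i j :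
  (s < n)%N -> (1 <= i <= n)%N -> (1 <= j <= n)%N ->
  let g := \sum_(k < s.+1) tt k *: 'X^k in
  let f := 'X^n + t *: g in
  bezout_coef n f f^`() i j =
  ahat n s tt t i j + atilde n s (bezout_mx s g g^`()) t i j.
Proof.
move=> lt_sn hi hj g f.
have gE k : g`_k = if (k <= s)%N then tt k else 0.
  by rewrite /g -poly_def coef_poly ltnS.
have size_g : (size g <= s.+1)%N by rewrite /g -poly_def size_poly.
have size_g' : (size g^`() <= s.+1)%N.
  have [->|g_neq0] := eqVneq g 0; first by rewrite deriv0 size_poly0.
  exact: leq_trans (ltnW (lt_size_deriv g_neq0)) size_g.
rewrite ahatE // atilde_bezoutE // bezout_coefE bezout_poly_coef_Xn_add_scale.
rewrite !bezout_poly_coefXnl !coefXn !coef_deriv !gE.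
rewrite (_ : (n - i + (n - j) + 1 - n)%N = (n + 1 - (i + j))%N); last by lia.
rewrite (_ : (n - i + (n - j) + 1 - n.-1)%N = (n + 2 - (i + j))%N); last by lia.
move: (bezout_poly_coef g g^`() (n - i) (n - j)) => C.
(* On an antidiagonal i + j = n + 2 - d with i, j >= 2, the terms t C(x^n, g')
   and - n t C(x^(n-1), g) combine to (d - n) t_d t = - (i + j - 2) t_d t. *)
repeat (first [case: ifPn => ? | case: eqP => ?]; try (exfalso; lia)).
all: rewrite ?mul0r ?mulr0 ?subr0 ?add0r ?addr0 ?sub0r ?oppr0 ?mul0rn /=.
all: try rewrite -[_ *+ _.+1]mulr_natr.
all: try (rewrite (_ : (n + 1 - (i + j)).+1 = (n + 2 - (i + j))%N); last by lia).
all: try (have -> : ((i + j - 2)%:R = n%:R - (n + 2 - (i + j))%:R :> F)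
  by rewrite -natrB; [congr (_%:R); lia | lia]).
all: try ring.
all: rewrite (_ : (n + 2 - (i + j))%N = 0%N); [ring | lia].
Qed.

End BezoutMatrix.

Unset Implicit Arguments.
Theorem proposition5p4 (F : fieldType) (charF0 : [pchar F] =i pred0)
  (n s : nat) (hs1 : (1 <= s)%N) (hsn : (s < n)%N)
  (tt : nat -> F) (t : F) :
  let g : {poly F} := \sum_(k < s.+1) tt k *: 'X^k in
  let f : {poly F} := 'X^n + t *: g in
  let B : 'M[F]_s := bezout_mx s g g^`() in
  bezout_mx n f f^`() =
    \matrix_(i < n, j < n) (ahat n s tt t i.+1 j.+1 + atilde n s B t i.+1 j.+1).
Proof.
move=> g f B; apply/matrixP => i j; rewrite !mxE.
by apply: bezout_coef_Xn_add_scale; rewrite ?ltn_ord.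
Qed.
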